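(* Let $A\in\mathbb{R}^{m\times n}$, and let $p:[0,\infty)\to\mathbb{R}$ be concave, increasing and continuous with right derivative $p'(0+)>0$. For $x\in\mathbb{R}^n$ define $R(x)\in\mathbb{R}^n$ by $$R(x)_i=\mathrm{sgn}(x_i)\Big(1-\frac{d_i(x)}{p'(0+)}\Big),$$ where $d_i(x)=p'(0+)$ if $x_i=0$, and, if $x_i\neq0$, $d_i(x)$ is any element of the superdifferential $[p'_+(|x_i|),p'_-(|x_i|)]$ of the concave function $p$ at $|x_i|$, chosen depending only on $|x_i|$. Let $\bar x\in\mathbb{R}^n$ have support $T$ and equal-height peaks, i.e. $|\bar x_i|=|\bar x_j|$ for all $i,j\in T$. Consider the iteration $x^{(0)}=\mathbf{0}$ and $$x^{(k+1)}\in\arg\min_{x\in\mathbb{R}^n}\ \|x\|_1-\langle R(x^{(k)}),x\rangle\quad\text{s.t.}\quad Ax=A\bar x,\qquad k=0,1,2,\dots$$ If basis pursuit uniquely recovers $\bar x$, i.e. $\bar x$ is the unique solution of $\min_x\|x\|_1$ s.t. $Ax=A\bar x$, then so does the iteration: for every $k\ge0$ the minimization problem defining $x^{(k+1)}$ has $\bar x$ as its unique solution, so $x^{(k)}=\bar x$ for all $k\ge1$.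
   Context: $\mathrm{sgn}(t)=t/|t|$ for $t\neq0$ and $\mathrm{sgn}(0)=0$. The support of $\bar x$ is $\{i:\bar x_i\neq0\}$. *)

From HB Require Import structures.
From mathcomp Require Import all_boot all_order all_algebra.
From mathcomp Require Import all_classical all_reals all_analysis.
Set Implicit Arguments. Unset Strict Implicit. Unset Printing Implicit Defensive.
Import Order.TTheory GRing.Theory Num.Theory.
Import numFieldNormedType.Exports.
Local Open Scope classical_set_scope.
Local Open Scope ring_scope.

Section Defs.
Variable R : realType.

Definition concave_on_nonneg (p : R -> R) : Prop :=
  forall x y t : R, 0 <= x -> 0 <= y -> 0 <= t -> t <= 1 ->
    t * p x + (1 - t) * p y <= p (t * x + (1 - t) * y).

(* p is increasing on [0, +oo) (read as nondecreasing) *)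
Definition increasing_on_nonneg (p : R -> R) : Prop :=
  forall x y : R, 0 <= x -> x <= y -> p x <= p y.

Definition is_right_deriv (p : R -> R) (t l : R) : Prop :=
  (fun h : R => (p (t + h) - p t) / h) @ at_right (0 : R) --> l.

Definition is_left_deriv (p : R -> R) (t l : R) : Prop :=
  (fun h : R => (p (t + h) - p t) / h) @ at_left (0 : R) --> l.

Definition superdiff_selection (p g : R -> R) : Prop :=
  forall t : R, 0 < t -> forall l r : R,
    is_right_deriv p t r -> is_left_deriv p t l -> r <= g t <= l.

(* d_i(x) and R(x) of the paper; dp0 = p'(0+), g = selection of superdifferential *)
Definition dweight (dp0 : R) (g : R -> R) (s : R) : R :=
  if s == 0 then dp0 else g `|s|.

Definition Rmap n (dp0 : R) (g : R -> R) (x : 'cV[R]_n) : 'cV[R]_n :=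
  \col_i (Num.sg (x i 0) * (1 - dweight dp0 g (x i 0) / dp0)).

Definition l1norm n (x : 'cV[R]_n) : R := \sum_i `|x i 0|.

Definition inner n (u x : 'cV[R]_n) : R := \sum_i u i 0 * x i 0.

Definition obj n (r x : 'cV[R]_n) : R := l1norm x - inner r x.

Definition is_argmin m n (A : 'M[R]_(m, n)) (b : 'cV[R]_m) (r x : 'cV[R]_n) : Prop :=
  A *m x = b /\ forall y : 'cV[R]_n, A *m y = b -> obj r x <= obj r y.

Definition unique_argmin m n (A : 'M[R]_(m, n)) (b : 'cV[R]_m) (r x : 'cV[R]_n) : Prop :=
  is_argmin A b r x /\ forall y : 'cV[R]_n, is_argmin A b r y -> y = x.

Definition bp_unique m n (A : 'M[R]_(m, n)) (xbar : 'cV[R]_n) : Prop :=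
  forall y : 'cV[R]_n, A *m y = A *m xbar -> y != xbar -> l1norm xbar < l1norm y.

Definition equal_height n (x : 'cV[R]_n) : Prop :=
  forall i j : 'I_n, x i 0 != 0 -> x j 0 != 0 -> `|x i 0| = `|x j 0|.

End Defs.

From HB Require Import structures.
From mathcomp Require Import all_boot all_order all_algebra.
From mathcomp Require Import all_classical all_reals all_analysis.
From mathcomp Require Import ring lra.
Set Implicit Arguments. Unset Strict Implicit. Unset Printing Implicit Defensive.
Import Order.TTheory GRing.Theory Num.Theory.
Import numFieldNormedType.Exports.
Local Open Scope classical_set_scope.
Local Open Scope ring_scope.

(* Concavity and monotonicity of p give 0 <= d <= p'(0+) for every
   superdifferential selection d, so R(0) = 0 and, when the peaks of xbar have
   equal height, R(xbar) = c sgn(xbar) with 0 <= c <= 1.  For such a reward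
   the objective at a feasible y exceeds its value at xbar by
   c (|y|_1 - <sgn xbar, y>) + (1 - c) (|y|_1 - |xbar|_1) >= 0.  If this gap
   vanishes for some y <> xbar, then c = 1 and y is sign-aligned with xbar;
   moving from xbar away from y, xbar + t (xbar - y) for small t > 0, then
   lowers the l1 norm, contradicting the uniqueness of basis pursuit. *)

Section SignVector.
Variables (R : realType) (n : nat).
Implicit Types (x y : 'cV[R]_n).

Definition sgv x : 'cV[R]_n := \col_i Num.sg (x i 0).

Lemma sgr_mul_le_norm (s y : R) : Num.sg s * y <= `|y|.
Proof.
rewrite (le_trans (ler_norm _)) // normrM normr_sg.
by case: (s != 0); rewrite ?mul0r ?mul1r.
Qed.

Lemma inner_sgv_le_l1norm x y : inner (sgv x) y <= l1norm y.
Proof. by apply: ler_sum => i _; rewrite mxE sgr_mul_le_norm. Qed.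

Lemma inner_sgv_self x : inner (sgv x) x = l1norm x.
Proof. by apply: eq_bigr => i _; rewrite mxE -normrEsg. Qed.

Lemma obj_scale_sgv (c : R) x y :
  obj (c *: sgv x) y = l1norm y - c * inner (sgv x) y.
Proof.
rewrite /obj /inner mulr_sumr; congr (_ - _).
by apply: eq_bigr => i _; rewrite mxE mulrA.
Qed.

Lemma inner_sgv_eq_l1norm x y : inner (sgv x) y = l1norm y ->
  forall i, Num.sg (x i 0) * y i 0 = `|y i 0|.
Proof.
move=> xy i; apply/eqP; rewrite eq_sym -subr_eq0; apply/eqP.
move: i (erefl true); apply: psumr_eq0P => [i _|].
  by rewrite subr_ge0 sgr_mul_le_norm.
rewrite sumrB -[X in X - _]/(l1norm y) -xy.
by under [inner _ _]eq_bigr do rewrite mxE; rewrite subrr.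
Qed.

(* Alignment already forces [b = 0] when [a = 0]. *)
Lemma norm_affine_aligned (a b t : R) : Num.sg a * b = `|b| ->
  t * `|b| <= (1 + t) * `|a| ->
  `|(1 + t) * a - t * b| = (1 + t) * `|a| - t * `|b|.
Proof.
have [-> | a0] := eqVneq a 0.
  by rewrite sgr0 mul0r => /esym/normr0_eq0 ->; rewrite !(mulr0, normr0, subrr).
move=> ab tb; have sg_norm1 : `|Num.sg a| = 1 by rewrite normr_sg a0.
rewrite -[LHS]mul1r -{1}sg_norm1 -normrM.
rewrite mulrBr (mulrCA _ (1 + t)) (mulrCA _ t) -normrEsg ab ger0_norm //.
by rewrite subr_ge0.
Qed.

Lemma l1norm_affine_aligned x y (t : R) :
  (forall i, Num.sg (x i 0) * y i 0 = `|y i 0|) ->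
  (forall i, t * `|y i 0| <= (1 + t) * `|x i 0|) ->
  l1norm ((1 + t) *: x - t *: y) = (1 + t) * l1norm x - t * l1norm y.
Proof.
move=> xy ty; rewrite /l1norm mulr_sumr mulr_sumr -sumrB.
by apply: eq_bigr => i _; rewrite !mxE norm_affine_aligned.
Qed.

Section BasisPursuit.
Variables (m : nat) (A : 'M[R]_(m, n)) (xb : 'cV[R]_n).
Hypothesis bp : bp_unique A xb.

(* For small [t > 0] the point [xb + t (xb - y)] is feasible and, by sign
   alignment, its l1 norm is [l1norm xb - t (l1norm y - l1norm xb)]. *)
Lemma bp_unique_sgv_aligned y : A *m y = A *m xb ->
  inner (sgv xb) y = l1norm y -> y = xb.
Proof.
move=> Ay /inner_sgv_eq_l1norm aligned.
have [// | yx] := eqVneq y xb; have lt_xy := bp Ay yx; exfalso.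
have [t [t_gt0 t_small]] : exists t : R,
    0 < t /\ forall i, t * `|y i 0| <= (1 + t) * `|xb i 0|.
  apply: (@filter_ex _ (0 : R)^'+); near=> t; split.
    by near: t; exact: nbhs_right_gt.
  near: t; apply: filter_forall => i.
  have [xi0 | xi0] := eqVneq (xb i 0) 0.
    have := aligned i; rewrite xi0 sgr0 mul0r => /esym/normr0_eq0 ->.
    by apply: nearW => t; rewrite normr0 !mulr0.
  have bound_gt0 : 0 < `|xb i 0| / (`|y i 0| + 1).
    by rewrite divr_gt0 ?normr_gt0 // ltr_wpDl.
  near=> t.
  have t_gt0 : 0 < t by near: t; exact: nbhs_right_gt.
  have : t < `|xb i 0| / (`|y i 0| + 1) by near: t; exact: nbhs_right_lt.
  rewrite ltr_pdivlMr ?ltr_wpDl // => tb.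
  have := normr_ge0 (xb i 0); nra.
pose z := (1 + t) *: xb - t *: y.
have Az : A *m z = A *m xb.
  by rewrite /z mulmxBr -!scalemxAr Ay -scalerBl addrK scale1r.
have zx : z != xb.
  apply: contra_neq yx => zx; apply/matrixP => i j; rewrite (ord1 j).
  have := congr1 (fun w : 'cV_n => w i 0) zx; rewrite /= !mxE => zi.
  have /eqP : t * (y i 0 - xb i 0) = 0 by lra.
  by rewrite mulf_eq0 (gt_eqF t_gt0) subr_eq0 => /eqP.
have := bp Az zx; rewrite l1norm_affine_aligned //; nra.
Unshelve. all: by end_near.
Qed.

Lemma unique_argmin_scale_sgv (c : R) : 0 <= c <= 1 ->
  unique_argmin A (A *m xb) (c *: sgv xb) xb.
Proof.
move=> /andP[c_ge0 c_le1]; set r := c *: sgv xb.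
have gap y : obj r y - obj r xb
    = c * (l1norm y - inner (sgv xb) y) + (1 - c) * (l1norm y - l1norm xb).
  by rewrite !obj_scale_sgv inner_sgv_self; ring.
have gap_ge0 y : A *m y = A *m xb ->
    c * (l1norm y - inner (sgv xb) y) >= 0 /\
    (1 - c) * (l1norm y - l1norm xb) >= 0.
  move=> Ay; rewrite !mulr_ge0 ?subr_ge0 ?inner_sgv_le_l1norm //.
  by have [->|/(bp Ay)/ltW] := eqVneq y xb.
have xb_min : is_argmin A (A *m xb) r xb.
  split=> // y /gap_ge0[h1 h2].
  suff : 0 <= obj r y - obj r xb by rewrite subr_ge0.
  rewrite gap; lra.
split=> // y [Ay /(_ _ (erefl (A *m xb)))] y_min.
have h : obj r y - obj r xb <= 0 by rewrite subr_le0.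
rewrite gap in h; have [h1 h2] := gap_ge0 y Ay.
have [// | yx] := eqVneq y xb; have lt_xy := bp Ay yx.
have [c_lt1 | c_ge1] := ltrP c 1; first by exfalso; nra.
apply: bp_unique_sgv_aligned => //.
have c1 : c = 1 by apply/eqP; rewrite eq_le c_le1 c_ge1.
rewrite c1 in h; have := inner_sgv_le_l1norm xb y; lra.
Qed.

End BasisPursuit.

Lemma Rmap0 (dp0 : R) (g : R -> R) : Rmap dp0 g (0 : 'cV[R]_n) = 0.
Proof. by apply/matrixP => i j; rewrite !mxE sgr0 mul0r. Qed.

Lemma Rmap_equal_height (dp0 : R) (g : R -> R) x : 0 < dp0 ->
  (forall h : R, 0 < h -> 0 <= g h <= dp0) -> equal_height x ->
  exists2 c : R, 0 <= c <= 1 & Rmap dp0 g x = c *: sgv x.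
Proof.
move=> dp0_gt0 g_bounds eqh.
have [[i0 xi0] | no_support] := pselect (exists i, x i 0 != 0); last first.
  exists 0; first by rewrite lexx ler01.
  apply/matrixP => i j; rewrite !mxE.
  have -> : x i 0 = 0 by apply/eqP; apply: contra_notT no_support => xi; exists i.
  by rewrite sgr0 !mul0r.
have /andP[g_ge0 g_le] : 0 <= g `|x i0 0| <= dp0 by rewrite g_bounds ?normr_gt0.
exists (1 - g `|x i0 0| / dp0).
  have : 0 <= g `|x i0 0| / dp0 <= 1 by rewrite divr_ge0 ?ler_pdivrMr ?mul1r // ltW.
  by move=> /andP[q_ge0 q_le1]; apply/andP; split; lra.
apply/matrixP => i j; rewrite !mxE /dweight.
have [-> | xi] := eqVneq (x i 0) 0; first by rewrite sgr0 !mul0r mulr0.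
by rewrite (eqh i i0 xi xi0) mulrC.
Qed.

End SignVector.

Section ConcaveSlopes.
Variables (R : realType) (p : R -> R).
Hypothesis p_concave : concave_on_nonneg p.
Implicit Types a b c d t u : R.

Definition chord_slope (a b : R) : R := (p b - p a) / (b - a).

Lemma chord_slopeC a b : chord_slope a b = chord_slope b a.
Proof. by rewrite /chord_slope -mulrNN -invrN !opprB. Qed.

Lemma diff_quotient_chord_slope t u : (p (t + u) - p t) / u = chord_slope t (t + u).
Proof. by rewrite /chord_slope addrAC subrr add0r. Qed.

Lemma chord_slope_three a b c : 0 <= a -> a < b -> b < c ->
  chord_slope a c <= chord_slope a b /\ chord_slope b c <= chord_slope a c.
Proof.
move=> a_ge0 ab bc; have ca_gt0 : 0 < c - a by lra.
pose t := (c - b) / (c - a).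
have t_ge0 : 0 <= t by rewrite divr_ge0 //; lra.
have t_le1 : t <= 1 by rewrite ler_pdivrMr //; lra.
have b_conv : t * a + (1 - t) * c = b by rewrite /t; field; lra.
have := p_concave a_ge0 (ltW (le_lt_trans a_ge0 (lt_trans ab bc))) t_ge0 t_le1.
rewrite b_conv -(ler_pM2r ca_gt0).
have -> : (t * p a + (1 - t) * p c) * (c - a) = (c - b) * p a + (b - a) * p c.
  by rewrite /t; field; lra.
move=> chord_below.
have cross X Y d1 d2 : 0 < d1 -> 0 < d2 -> X * d2 <= Y * d1 -> X / d1 <= Y / d2.
  by move=> d1_gt0 d2_gt0; rewrite ler_pdivlMr // mulrAC ler_pdivrMr.
by split; apply: cross; lra.
Qed.

Lemma chord_slope_antitone a b c d : 0 <= a -> a < b -> b <= c -> c < d ->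
  chord_slope c d <= chord_slope a b.
Proof.
move=> a_ge0 ab bc cd.
have [ac_le ab_le] := chord_slope_three a_ge0 ab (le_lt_trans bc cd).
have [<- | b_neq_c] := eqVneq b c; first exact: le_trans ab_le ac_le.
have bc_lt : b < c by rewrite lt_neqAle b_neq_c bc.
have [_ bd_le] := chord_slope_three (ltW (le_lt_trans a_ge0 ab)) bc_lt cd.
exact: le_trans bd_le (le_trans ab_le ac_le).
Qed.

Lemma left_deriv_le_right_deriv0 (dp0 h : R) : is_right_deriv p 0 dp0 -> 0 < h ->
  exists2 l, is_left_deriv p h l & l <= dp0.
Proof.
move=> p_deriv0 h_gt0; pose q u := (p (h + u) - p h) / u.
have qNE u : q (- u) = chord_slope (h - u) h.
  by rewrite /q diff_quotient_chord_slope chord_slopeC.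
have h2_gt0 : 0 < h / 2 by rewrite divr_gt0.
set l := inf ((q \o -%R) @` [set` Interval (BRight 0) (BLeft h)]).
have qN_cvg : (q \o -%R) u @[u --> 0^'+] --> l.
  apply: nondecreasing_at_right_cvgr; first by rewrite bnd_simp.
    move=> u v; rewrite !in_itv /= => /andP[u_gt0 uh] /andP[v_gt0 vh] uv.
    rewrite /= !qNE; have [-> // | u_neq_v] := eqVneq u v.
    have u_lt_v : u < v by rewrite lt_neqAle u_neq_v uv.
    by case: (@chord_slope_three (h - v) (h - u) h) => //; lra.
  exists (chord_slope h (h + 1)) => _ [u /= + <-].
  rewrite in_itv /= => /andP[u_gt0 uh].
  by rewrite /= qNE chord_slope_antitone //; lra.
exists l; first by apply/cvg_at_leftNP; rewrite oppr0.
apply: (@le_trans _ _ (chord_slope (h / 2) h)).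
  apply: (cvgr_to_le qN_cvg); near=> u.
  have u_gt0 : 0 < u by near: u; exact: nbhs_right_gt.
  have u_lt : u < h / 2 by near: u; exact: nbhs_right_lt.
  by rewrite /= qNE; case: (@chord_slope_three (h / 2) (h - u) h) => //; lra.
apply: (cvgr_to_ge p_deriv0); near=> u.
have u_gt0 : 0 < u by near: u; exact: nbhs_right_gt.
have u_lt : u < h / 2 by near: u; exact: nbhs_right_lt.
by rewrite diff_quotient_chord_slope add0r chord_slope_antitone //; lra.
Unshelve. all: by end_near.
Qed.

Hypothesis p_nondecr : increasing_on_nonneg p.

Lemma chord_slope_ge0 a b : 0 <= a -> a < b -> 0 <= chord_slope a b.
Proof. by move=> a_ge0 ab; rewrite divr_ge0 ?subr_ge0 ?p_nondecr // ltW. Qed.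

Lemma right_deriv_ge0 h : 0 < h -> exists2 r, is_right_deriv p h r & 0 <= r.
Proof.
move=> h_gt0; pose q u := (p (h + u) - p h) / u.
have qE u : q u = chord_slope h (h + u) by exact: diff_quotient_chord_slope.
set r := sup (q @` [set` Interval (BRight 0) (BLeft 1)]).
have q_cvg : q u @[u --> 0^'+] --> r.
  apply: nonincreasing_at_right_cvgr; first by rewrite bnd_simp.
    move=> u v; rewrite !in_itv /= => /andP[u_gt0 _] /andP[v_gt0 _] uv.
    rewrite !qE; have [-> // | u_neq_v] := eqVneq u v.
    have u_lt_v : u < v by rewrite lt_neqAle u_neq_v uv.
    by case: (@chord_slope_three h (h + u) (h + v)) => //; lra.
  exists (chord_slope 0 h) => _ [u /= + <-].
  rewrite in_itv /= => /andP[u_gt0 _].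
  by rewrite qE chord_slope_antitone //; lra.
exists r => //; apply: (cvgr_to_ge q_cvg); near=> u.
have u_gt0 : 0 < u by near: u; exact: nbhs_right_gt.
by rewrite qE chord_slope_ge0 //; lra.
Unshelve. all: by end_near.
Qed.

Lemma superdiff_selection_bounds (dp0 : R) (g : R -> R) :
  is_right_deriv p 0 dp0 -> superdiff_selection p g ->
  forall h : R, 0 < h -> 0 <= g h <= dp0.
Proof.
move=> p_deriv0 g_sel h h_gt0.
have [r r_deriv r_ge0] := right_deriv_ge0 h_gt0.
have [l l_deriv l_le] := left_deriv_le_right_deriv0 p_deriv0 h_gt0.
have /andP[rg gl] := g_sel h h_gt0 l r r_deriv l_deriv.
by rewrite (le_trans r_ge0 rg) (le_trans gl l_le).
Qed.

End ConcaveSlopes.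

Theorem theorem4p2 (R : realType) (m n : nat) (A : 'M[R]_(m, n))
    (p : R -> R) (dp0 : R) (g : R -> R) (xbar : 'cV[R]_n)
    (x : nat -> 'cV[R]_n) :
  concave_on_nonneg p ->
  increasing_on_nonneg p ->
  {within `[0, +oo[, continuous p} ->
  is_right_deriv p 0 dp0 -> 0 < dp0 ->
  superdiff_selection p g ->
  equal_height xbar ->
  bp_unique A xbar ->
  x 0%N = 0 ->
  (forall k : nat, is_argmin A (A *m xbar) (Rmap dp0 g (x k)) (x k.+1)) ->
  forall k : nat,
    unique_argmin A (A *m xbar) (Rmap dp0 g (x k)) xbar /\ x k.+1 = xbar.
Proof.
move=> p_concave p_nondecr _ p_deriv0 dp0_gt0 g_sel xbar_eqh bp x0 x_step.
have g_bounds := superdiff_selection_bounds p_concave p_nondecr p_deriv0 g_sel.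
have xbar_unique v : v = 0 \/ v = xbar ->
    unique_argmin A (A *m xbar) (Rmap dp0 g v) xbar.
  case=> ->.
    rewrite Rmap0 -(scale0r (sgv xbar)).
    by apply: (unique_argmin_scale_sgv bp); rewrite lexx ler01.
  have [c c01 ->] := Rmap_equal_height dp0_gt0 g_bounds xbar_eqh.
  exact (unique_argmin_scale_sgv bp c01).
have x_succ k : x k.+1 = xbar.
  elim: k => [|k IH]; first exact: (xbar_unique _ (or_introl x0)).2 _ (x_step 0%N).
  exact: (xbar_unique _ (or_intror IH)).2 _ (x_step k.+1).
move=> k; split; last exact: x_succ.
by apply: xbar_unique; case: k => [|k]; [left | right; apply: x_succ].
Qed.
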